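(* Consider the equation $x'(t)+p(t)\,x(\tau(t))=0$, $t\ge t_0$, where $p,\tau:[t_0,\infty)\to[0,\infty)$ are continuous, $\tau(t)\le t$ and $\lim_{t\to\infty}\tau(t)=\infty$. Assume $\liminf_{t\to\infty}\int_{\tau(t)}^{t}p(s)\,ds=\beta\in(0,1/e]$ and let $\lambda^{*}$ be the smallest real root of $e^{\beta\lambda}=\lambda$. Let $\sigma:[t_0,\infty)\to\mathbb{R}$ be continuous and non-decreasing with $\tau(t)\le\sigma(t)\le t$ for $t\ge t_0$. If $$\limsup_{\varepsilon\to0+}\Bigg(\limsup_{t\to+\infty}\int_{\sigma(t)}^{t}p(s)\exp\bigg(\int_{\tau(s)}^{\sigma(t)}(\lambda^{*}-\varepsilon)\,p(\xi)\,d\xi\bigg)ds\Bigg)>1,$$ then all solutions of this equation oscillate.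
   Context: A solution is a function $x\in C([T_0,\infty);\mathbb{R})$ for some $T_0\ge t_0$, continuously differentiable on $[\tau_{(-1)}(T_0),\infty)$ where $\tau_{(-1)}(t)=\sup\{s:\tau(s)\le t\}$, satisfying the equation for $t\ge\tau_{(-1)}(T_0)$. It is oscillatory if it has arbitrarily large zeros; ''all solutions oscillate'' means every solution is oscillatory. *)

From Stdlib Require Import Reals Lra ClassicalEpsilon.
Open Scope R_scope.

(* Signed Riemann integral \int_a^b f (value of RiemannInt when f is
   Riemann integrable on [a,b]; an unspecified real otherwise). *)
Definition Rint (f : R -> R) (a b : R) : R :=
  epsilon (inhabits 0)
    (fun v => exists pr : Riemann_integrable f a b, RiemannInt pr = v).

Definition cont_from (a : R) (f : R -> R) : Prop :=
  forall t, a <= t -> forall e, 0 < e -> exists d, 0 < d /\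
    forall s, a <= s -> Rabs (s - t) < d -> Rabs (f s - f t) < e.

Definition has_deriv_from (a : R) (f f' : R -> R) : Prop :=
  forall t, a <= t -> forall e, 0 < e -> exists d, 0 < d /\
    forall s, a <= s -> s <> t -> Rabs (s - t) < d ->
      Rabs ((f s - f t) / (s - t) - f' t) < e.

(* x is a solution of x'(t) + p(t) x(tau(t)) = 0 (equation posed for t >= t0):
   for some T0 >= t0, x is continuous on [T0,oo), continuously differentiable
   on [T1,oo) where T1 = tau_(-1)(T0) = sup{s >= t0 : tau s <= T0},
   and satisfies the equation for t >= T1. *)
Definition is_solution (t0 : R) (p tau x : R -> R) : Prop :=
  exists T0 T1 (x' : R -> R),
    t0 <= T0 /\
    is_lub (fun s => t0 <= s /\ tau s <= T0) T1 /\
    cont_from T0 x /\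
    has_deriv_from T1 x x' /\
    cont_from T1 x' /\
    (forall t, T1 <= t -> x' t + p t * x (tau t) = 0).

Definition oscillatory (x : R -> R) : Prop :=
  forall T, exists t, T <= t /\ x t = 0.

Definition liminf_infty_eq (f : R -> R) (b : R) : Prop :=
  forall e, 0 < e ->
    (exists T, forall t, T <= t -> b - e < f t) /\
    (forall T, exists t, T <= t /\ f t < b + e).

(* limsup_{t -> +oo} f t > c  (limsup taken in the extended reals). *)
Definition limsup_infty_gt (f : R -> R) (c : R) : Prop :=
  exists c', c < c' /\ forall T, exists t, T <= t /\ c' < f t.

(* limsup_{e -> 0+} L(e) > c, where "L(e) > c'" is given by the predicate
   Lgt e c' (L possibly extended-real valued). *)
Definition limsup_0plus_gt (Lgt : R -> R -> Prop) (c : R) : Prop :=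
  exists c', c < c' /\ forall d, 0 < d -> exists e, 0 < e < d /\ Lgt e c'.

(* Suppose a solution x does not oscillate.  Replacing x by -x if necessary,
   x is positive on some [A, +oo), and the equation makes it nonincreasing.
   The ratio w(t) = x(tau t) / x(t) then satisfies w(t) = exp (int_{tau t}^t p w),
   so w >= 1 eventually, and "w >= l eventually" implies
   "w >= exp (l (beta - d)) eventually" for every d > 0, because the integral
   of p over [tau t, t] is eventually above beta - d.  An abstract lemma about
   subsets of the reals closed under these maps shows that w >= lam - eps
   eventually for every eps > 0, lam being the smallest root of exp (beta l) = l.
   Integrating the equation over [sigma t, t] with this bound on w gives
     x(sigma t) * int_{sigma t}^t p(s) exp (int_{tau s}^{sigma t} (lam-eps) p) ds
       <= x(sigma t) - x(t) < x(sigma t),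
   so the integral in the hypothesis stays below 1, a contradiction. *)

From Stdlib Require Import Reals Lra ClassicalEpsilon Classical.
From Coquelicot Require Import Coquelicot.
Open Scope R_scope.

Lemma cont_from_continuous (a : R) (f : R -> R) (t : R) :
  cont_from a f -> a < t -> continuous f t.
Proof.
  intros Hc Ht. apply continuity_pt_filterlim.
  intros eps Heps. destruct (Hc t (Rlt_le _ _ Ht) eps Heps) as [d [Hd Hclose]].
  exists (Rmin d (t - a)). split; [apply Rmin_pos; lra|].
  intros y [_ Hy]. simpl in *. unfold R_dist in *.
  assert (Hm1 := Rmin_l d (t - a)). assert (Hm2 := Rmin_r d (t - a)).
  apply Hclose; [|lra].
  destruct (Rcase_abs (y - t));
    [rewrite Rabs_left in Hy by lra | rewrite Rabs_right in Hy by lra]; lra.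
Qed.

Lemma has_deriv_from_is_derive (a : R) (f f' : R -> R) (t : R) :
  has_deriv_from a f f' -> a < t -> is_derive f t (f' t).
Proof.
  intros Hd Ht. apply is_derive_Reals. intros eps Heps.
  destruct (Hd t (Rlt_le _ _ Ht) eps Heps) as [d [Hd0 Hquot]].
  assert (Hr : 0 < Rmin d (t - a)) by (apply Rmin_pos; lra).
  exists (mkposreal _ Hr). intros h Hh Hhr. simpl in Hhr.
  assert (Hm1 := Rmin_l d (t - a)). assert (Hm2 := Rmin_r d (t - a)).
  specialize (Hquot (t + h)). replace (t + h - t) with h in Hquot by ring.
  apply Hquot; try lra.
  destruct (Rcase_abs h);
    [rewrite Rabs_left in Hhr by lra | rewrite Rabs_right in Hhr by lra]; lra.
Qed.

Lemma ex_RInt_cont (f : R -> R) (a b : R) :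
  a <= b -> (forall z, a <= z <= b -> continuous f z) -> ex_RInt f a b.
Proof.
  intros Hab Hc. apply (ex_RInt_continuous (V:=R_CompleteNormedModule)).
  rewrite Rmin_left, Rmax_right by lra. exact Hc.
Qed.

Lemma Rint_RInt (f : R -> R) (a b : R) :
  (forall z, Rmin a b <= z <= Rmax a b -> continuous f z) -> Rint f a b = RInt f a b.
Proof.
  intros Hc. assert (Hr := ex_RInt_Reals_0 _ _ _ (ex_RInt_continuous f a b Hc)).
  unfold Rint.
  destruct (epsilon_spec (inhabits 0)
              (fun v => exists pr : Riemann_integrable f a b, RiemannInt pr = v))
    as [pr Hpr].
  { exists (RiemannInt Hr), Hr. reflexivity. }
  rewrite <- Hpr. symmetry. apply RInt_Reals.
Qed.

Lemma RInt_lower_continuous (h : R -> R) (a c y : R) :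
  (forall z, a <= z -> continuous h z) -> a <= c -> a < y ->
  continuous (fun z => RInt h z c) y.
Proof.
  intros Hh Hc Hy. apply (continuous_RInt_2 (V:=R_NormedModule) h y c).
  apply (filter_imp (fun z => a < z)); [|exact (open_gt a y Hy)].
  intros z Hz. apply (RInt_correct (V:=R_CompleteNormedModule)).
  apply (ex_RInt_continuous (V:=R_CompleteNormedModule)).
  intros u [Hu _]. apply Hh.
  assert (Hmin := Rmin_glb z c a ltac:(lra) Hc). lra.
Qed.

Lemma exp_le_mono (a b : R) : a <= b -> exp a <= exp b.
Proof.
  intros H. destruct (Rle_lt_or_eq_dec _ _ H) as [Hlt|Heq].
  - left. apply exp_increasing, Hlt.
  - subst. lra.
Qed.

Lemma kernel_weight_continuous (p tau h : R -> R) (a c s : R) :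
  continuous p s -> continuous tau s -> (forall z, a <= z -> continuous h z) ->
  a <= c -> locally s (fun u => a < tau u) ->
  continuous (fun u => p u * exp (Rint h (tau u) c)) s.
Proof.
  intros Hp Htau Hh Hc Hloc.
  apply (continuous_ext_loc _ (fun u => p u * exp (RInt h (tau u) c))).
  - apply (filter_imp (fun u => a < tau u)); [|exact Hloc].
    intros u Hu. rewrite Rint_RInt; [reflexivity|].
    intros z [Hz _]. apply Hh.
    assert (Hmin := Rmin_glb (tau u) c a ltac:(lra) Hc). lra.
  - apply (continuous_mult p (fun u => exp (RInt h (tau u) c))); [exact Hp|].
    apply continuous_exp_comp, (continuous_comp tau (fun z => RInt h z c)); [exact Htau|].
    apply (RInt_lower_continuous h a c); auto.
    exact (locally_singleton _ _ Hloc).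
Qed.

Lemma positive_persists (x : R -> R) (A : R) :
  (forall s, A <= s -> continuous x s) -> (forall s, A <= s -> x s <> 0) ->
  0 < x A -> forall s, A <= s -> 0 < x s.
Proof.
  intros Hc Hnz HA s Hs.
  destruct (Rlt_or_le 0 (x s)) as [Hpos|Hle]; [exact Hpos|exfalso].
  assert (Hneg : x s < 0) by (destruct Hle as [|H0]; [lra|destruct (Hnz s Hs H0)]).
  destruct (Ranalysis5.IVT_interv (fun u => - x u) A s) as [z [Hz Hz0]].
  - intros a Ha. apply continuity_pt_filterlim, (continuous_opp x), Hc. lra.
  - destruct (Rle_lt_or_eq_dec _ _ Hs) as [Hlt|Heq]; [exact Hlt|subst; lra].
  - lra.
  - lra.
  - apply (Hnz z); lra.
Qed.

Lemma constant_sign (x : R -> R) (A : R) :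
  (forall s, A <= s -> continuous x s) -> (forall s, A <= s -> x s <> 0) ->
  (forall s, A <= s -> 0 < x s) \/ (forall s, A <= s -> x s < 0).
Proof.
  intros Hc Hnz. destruct (Rdichotomy _ _ (Hnz A (Rle_refl A))) as [Hneg|Hpos].
  - right. intros s Hs.
    enough (0 < - x s) by lra.
    apply (positive_persists (fun u => - x u) A); [| |lra|exact Hs].
    + intros u Hu. apply (continuous_opp x), Hc, Hu.
    + intros u Hu H0. apply (Hnz u Hu). lra.
  - left. apply positive_persists; auto.
Qed.

Lemma lub_approx (E : R -> Prop) (L g : R) :
  is_lub E L -> 0 < g -> exists l, E l /\ L - g < l.
Proof.
  intros [_ Hleast] Hg. apply NNPP; intro Hno.
  assert (L <= L - g); [|lra].
  apply Hleast. intros l El. apply Rnot_lt_le. intro Hl. apply Hno. exists l; auto.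
Qed.

Section ExpIteration.
Variables (beta lam : R) (S : R -> Prop).
Hypothesis beta_pos : 0 < beta.
Hypothesis lam_min : forall l, exp (beta * l) = l -> lam <= l.

(* A nonnegative L with exp (beta L) <= L lies above a root, hence above lam. *)
Lemma smallest_root_le (L : R) : 0 <= L -> exp (beta * L) <= L -> lam <= L.
Proof.
  intros HL HeL.
  destruct (IVT_cor (fun y => exp (beta * y) - y) 0 L) as [z [Hz Hz0]].
  - intros y. reg.
  - exact HL.
  - rewrite Rmult_0_r, exp_0. lra.
  - apply Rle_trans with z; [apply lam_min; lra|lra].
Qed.

Hypothesis S_down : forall l l', l' <= l -> S l -> S l'.
Hypothesis S_step : forall l d, 0 <= l -> S l -> 0 < d -> S (exp (l * (beta - d))).

(* A positive supremum L of the nonnegative part of S satisfies exp (beta L) <= L: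
   otherwise an element of S close to L would be mapped above L. *)
Lemma sup_subfixed (L : R) :
  is_lub (fun l => 0 <= l /\ S l) L -> 0 < L -> exp (beta * L) <= L.
Proof.
  intros HL HL0. apply Rnot_lt_le; intro Hlt.
  assert (Hgap : ln L < beta * L).
  { rewrite <- (ln_exp (beta * L)). apply ln_increasing; lra. }
  set (g := beta * L - ln L).
  set (gam := g / (2 * (L + beta))).
  assert (Hgam : gam * (L + beta) = g / 2) by (unfold gam; field; lra).
  assert (Hgam0 : 0 < gam) by (unfold gam, g; apply Rdiv_lt_0_compat; lra).
  set (d := Rmin gam beta).
  assert (Hd1 : d <= gam) by apply Rmin_l. assert (Hd2 : d <= beta) by apply Rmin_r.
  assert (Hd0 : 0 < d) by (apply Rmin_pos; lra).
  destruct (lub_approx _ L gam HL Hgam0) as [l [[Hl0 Sl] Hl]].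
  assert (Hnext : exp (l * (beta - d)) <= L).
  { apply (proj1 HL). split; [left; apply exp_pos|apply S_step; auto]. }
  assert (Hbig : ln L < l * (beta - d)).
  { assert ((l - (L - gam)) * (beta - d) >= 0) by (apply Rle_ge, Rmult_le_pos; lra).
    assert (L * d <= L * gam) by (apply Rmult_le_compat_l; lra).
    assert (0 <= gam * d) by (apply Rmult_le_pos; lra).
    unfold g in Hgam. nra. }
  apply exp_increasing in Hbig. rewrite exp_ln in Hbig by lra. lra.
Qed.

Lemma below_smallest_root (a : R) : 0 < a -> S a -> forall l, l < lam -> S l.
Proof.
  intros Ha Sa l Hl.
  destruct (classic (exists B, forall l', 0 <= l' -> S l' -> l' <= B)) as [[B HB]|Hunb].
  - destruct (completeness (fun l' => 0 <= l' /\ S l')) as [L HL].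
    + exists B. intros l' [Hl' Sl']. auto.
    + exists a. split; [lra|exact Sa].
    + assert (HaL : a <= L) by (apply (proj1 HL); split; [lra|exact Sa]).
      assert (HlamL := smallest_root_le L ltac:(lra) (sup_subfixed L HL ltac:(lra))).
      destruct (lub_approx _ L (L - l) HL ltac:(lra)) as [l' [[_ Sl'] Hl']].
      apply (S_down l'); [lra|exact Sl'].
  - apply NNPP; intro Hnot. apply Hunb. exists l. intros l' _ Sl'.
    apply Rnot_lt_le; intro Hlt. apply Hnot, (S_down l'); [lra|exact Sl'].
Qed.

End ExpIteration.

Section PositiveSolution.
Variables (t0 : R) (p tau sigma : R -> R) (beta lam : R) (x x' : R -> R) (A : R).
Hypothesis p_cont : forall s, t0 < s -> continuous p s.
Hypothesis tau_cont : forall s, t0 < s -> continuous tau s.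
Hypothesis p_nonneg : forall t, t0 <= t -> 0 <= p t.
Hypothesis tau_le : forall t, t0 <= t -> tau t <= t.
Hypothesis tau_lim : forall m, exists T, forall t, T <= t -> m < tau t.
Hypothesis beta_liminf : liminf_infty_eq (fun t => Rint p (tau t) t) beta.
Hypothesis beta_pos : 0 < beta.
Hypothesis lam_min : forall l, exp (beta * l) = l -> lam <= l.
Hypothesis sigma_mono : forall s t, t0 <= s -> s <= t -> sigma s <= sigma t.
Hypothesis sigma_bounds : forall t, t0 <= t -> tau t <= sigma t <= t.
Hypothesis cond : limsup_0plus_gt
  (fun eps c => limsup_infty_gt
     (fun t => Rint (fun s => p s *
          exp (Rint (fun xi => (lam - eps) * p xi) (tau s) (sigma t)))
        (sigma t) t) c)
  1.
Hypothesis A_gt : t0 < A.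
Hypothesis x_cont : forall s, A <= s -> continuous x s.
Hypothesis x_deriv : forall s, A <= s -> is_derive x s (x' s).
Hypothesis x_eq : forall s, A <= s -> x' s + p s * x (tau s) = 0.
Hypothesis x_pos : forall s, A <= s -> 0 < x s.

Definition ratio (u : R) : R := x (tau u) / x u.

Definition ratio_eventually_ge (l : R) : Prop :=
  exists T, forall t, T <= t -> l <= ratio t.

Lemma ratio_eventually_ge_down (l l' : R) :
  l' <= l -> ratio_eventually_ge l -> ratio_eventually_ge l'.
Proof. intros H [T HT]. exists T. intros t Ht. specialize (HT t Ht). lra. Qed.

(* From a threshold M on, tau maps into [A, +oo), where x is positive and smooth. *)
Section Threshold.
Variable M : R.
Hypothesis M_ge : A <= M.
Hypothesis tau_ge : forall s, M <= s -> A <= tau s.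

Lemma x_tau_continuous (s : R) : M <= s -> continuous (fun u => x (tau u)) s.
Proof.
  intros Hs. apply (continuous_comp tau x); [apply tau_cont; lra|apply x_cont, tau_ge, Hs].
Qed.

Lemma p_x_tau_continuous (s : R) : M <= s -> continuous (fun u => p u * x (tau u)) s.
Proof.
  intros Hs. apply (continuous_mult p (fun u => x (tau u)));
    [apply p_cont; lra|apply x_tau_continuous, Hs].
Qed.

Lemma p_ratio_continuous (s : R) : M <= s -> continuous (fun u => p u * ratio u) s.
Proof.
  intros Hs. apply (continuous_mult p ratio); [apply p_cont; lra|].
  apply (continuous_mult (fun u => x (tau u)) (fun u => / x u)).
  - apply x_tau_continuous, Hs.
  - apply continuous_Rinv_comp; [apply x_cont; lra|apply Rgt_not_eq, x_pos; lra].
Qed.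

Lemma integral_p_x_tau (a b : R) :
  M <= a <= b -> RInt (fun u => p u * x (tau u)) a b = x a - x b.
Proof.
  intros Hab.
  assert (H := is_RInt_derive (fun u => - x u) (fun u => p u * x (tau u)) a b).
  rewrite Rmin_left, Rmax_right in H by lra.
  apply is_RInt_unique in H.
  - rewrite H. unfold minus, plus, opp; simpl. ring.
  - intros u Hu. replace (p u * x (tau u)) with (opp (x' u)).
    + apply (is_derive_opp x), x_deriv. lra.
    + unfold opp; simpl. specialize (x_eq u ltac:(lra)). lra.
  - intros u Hu. apply p_x_tau_continuous. lra.
Qed.

(* Logarithmic form: (ln x)' = - p w, so int_a^b p w = ln (x a) - ln (x b). *)
Lemma integral_p_ratio (a b : R) :
  M <= a <= b -> RInt (fun u => p u * ratio u) a b = ln (x a) - ln (x b).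
Proof.
  intros Hab.
  assert (H := is_RInt_derive (fun u => - ln (x u)) (fun u => p u * ratio u) a b).
  rewrite Rmin_left, Rmax_right in H by lra.
  apply is_RInt_unique in H.
  - rewrite H. unfold minus, plus, opp; simpl. ring.
  - intros u Hu. replace (p u * ratio u) with (opp (scal (x' u) (/ x u))).
    + apply (is_derive_opp (fun u => ln (x u))), (is_derive_comp ln x).
      * apply is_derive_ln, x_pos. lra.
      * apply x_deriv. lra.
    + unfold opp, scal; simpl. unfold mult; simpl. unfold ratio.
      specialize (x_eq u ltac:(lra)).
      replace (x' u) with (- (p u * x (tau u))) by lra.
      field. apply Rgt_not_eq, x_pos. lra.
  - intros u Hu. apply p_ratio_continuous. lra.
Qed.

(* Since p >= 0 and x(tau) > 0, the solution is nonincreasing. *)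
Lemma x_nonincreasing (a b : R) : M <= a <= b -> x b <= x a.
Proof.
  intros Hab. assert (H := integral_p_x_tau a b Hab).
  enough (0 <= RInt (fun u => p u * x (tau u)) a b) by lra.
  apply RInt_ge_0; [lra| |].
  - apply ex_RInt_cont; [lra|]. intros z Hz. apply p_x_tau_continuous. lra.
  - intros u Hu. apply Rmult_le_pos; [apply p_nonneg; lra|].
    left. apply x_pos, tau_ge. lra.
Qed.

Lemma x_exp_identity (a b : R) :
  M <= a <= b -> x a = x b * exp (RInt (fun u => p u * ratio u) a b).
Proof.
  intros Hab. rewrite (integral_p_ratio a b Hab).
  unfold Rminus. rewrite exp_plus, exp_Ropp, !exp_ln by (apply x_pos; lra).
  field. apply Rgt_not_eq, x_pos. lra.
Qed.

Lemma ratio_exp_identity (t : R) :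
  M <= tau t -> t0 <= t -> ratio t = exp (RInt (fun u => p u * ratio u) (tau t) t).
Proof.
  intros H1 H2. assert (tau t <= t) by (apply tau_le, H2).
  unfold ratio at 1. rewrite (x_exp_identity (tau t) t) by lra.
  field. apply Rgt_not_eq, x_pos. lra.
Qed.

(* Since x is nonincreasing and tau t <= t, w >= 1 eventually. *)
Lemma ratio_eventually_ge_1 : ratio_eventually_ge 1.
Proof.
  destruct (tau_lim M) as [N HN]. exists (Rmax N M). intros t Ht.
  assert (H1 := Rmax_l N M). assert (H2 := Rmax_r N M).
  assert (Htau : M < tau t) by (apply HN; lra).
  assert (tau t <= t) by (apply tau_le; lra).
  assert (Hmono := x_nonincreasing (tau t) t ltac:(lra)).
  assert (0 < x t) by (apply x_pos; lra).
  unfold ratio. apply (Rmult_le_reg_r (x t)); [lra|]. field_simplify; lra.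
Qed.

(* One step of the iteration: w >= l eventually and int_{tau t}^t p > beta - d
   eventually give w >= exp (l (beta - d)) eventually. *)
Lemma ratio_eventually_ge_step (l d : R) :
  0 <= l -> ratio_eventually_ge l -> 0 < d ->
  ratio_eventually_ge (exp (l * (beta - d))).
Proof.
  intros Hl [Tl HTl] Hd.
  destruct (beta_liminf d Hd) as [[Tb HTb] _].
  destruct (tau_lim (Rmax M Tl)) as [N HN].
  exists (Rmax (Rmax N Tb) M). intros t Ht.
  assert (H1 := Rmax_l N Tb). assert (H2 := Rmax_r N Tb).
  assert (H3 := Rmax_l (Rmax N Tb) M). assert (H4 := Rmax_r (Rmax N Tb) M).
  assert (H5 := Rmax_l M Tl). assert (H6 := Rmax_r M Tl).
  assert (Htau := HN t ltac:(lra)).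
  assert (Ht0 : t0 <= t) by lra.
  assert (Htt := tau_le t Ht0).
  specialize (HTb t ltac:(lra)). simpl in HTb.
  rewrite Rint_RInt in HTb
    by (rewrite Rmin_left, Rmax_right by lra; intros z Hz; apply p_cont; lra).
  rewrite ratio_exp_identity by lra. apply exp_le_mono.
  assert (Ep : ex_RInt p (tau t) t)
    by (apply ex_RInt_cont; [lra|intros z Hz; apply p_cont; lra]).
  assert (E := RInt_scal p (tau t) t l Ep).
  unfold scal in E; simpl in E; unfold mult in E; simpl in E.
  apply Rle_trans with (RInt (fun u => l * p u) (tau t) t).
  - rewrite E. apply Rmult_le_compat_l; lra.
  - apply RInt_le; [lra| | |].
    + apply ex_RInt_cont; [lra|]. intros z Hz.
      apply (continuous_mult (fun _ => l) p); [apply continuous_const|apply p_cont; lra].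
    + apply ex_RInt_cont; [lra|]. intros z Hz. apply p_ratio_continuous. lra.
    + intros u Hu. assert (l <= ratio u) by (apply HTl; lra).
      assert (0 <= p u) by (apply p_nonneg; lra). nra.
Qed.

Lemma ratio_eventually_ge_below_lam (e : R) : 0 < e -> ratio_eventually_ge (lam - e).
Proof.
  intros He.
  apply (below_smallest_root beta lam ratio_eventually_ge beta_pos lam_min
           ratio_eventually_ge_down ratio_eventually_ge_step 1);
    [lra|exact ratio_eventually_ge_1|lra].
Qed.

Lemma x_tau_lower_bound (e s c : R) :
  M <= tau s <= c -> (forall u, tau s <= u <= c -> lam - e <= ratio u) ->
  x c * exp (Rint (fun xi => (lam - e) * p xi) (tau s) c) <= x (tau s).
Proof.
  intros Hs Hw.
  assert (Hh : forall z, M <= z -> continuous (fun xi => (lam - e) * p xi) z).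
  { intros z Hz. apply (continuous_mult (fun _ => lam - e) p);
      [apply continuous_const|apply p_cont; lra]. }
  rewrite Rint_RInt
    by (rewrite Rmin_left, Rmax_right by lra; intros z Hz; apply Hh; lra).
  rewrite (x_exp_identity (tau s) c) by lra.
  apply Rmult_le_compat_l; [left; apply x_pos; lra|].
  apply exp_le_mono, RInt_le; [lra| | |].
  - apply ex_RInt_cont; [lra|]. intros z Hz. apply Hh. lra.
  - apply ex_RInt_cont; [lra|]. intros z Hz. apply p_ratio_continuous. lra.
  - intros u Hu. assert (lam - e <= ratio u) by (apply Hw; lra).
    assert (0 <= p u) by (apply p_nonneg; lra). nra.
Qed.

(* If x c * g <= p x(tau) on [c, t], integrating the equation gives
   x c * int_c^t g <= x c - x t < x c. *)
Lemma weighted_integral_lt_1 (g : R -> R) (c t : R) :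
  M <= c <= t -> (forall s, c <= s <= t -> continuous g s) ->
  (forall s, c < s < t -> x c * g s <= p s * x (tau s)) -> Rint g c t < 1.
Proof.
  intros Hct Hg Hle.
  rewrite Rint_RInt by (rewrite Rmin_left, Rmax_right by lra; exact Hg).
  assert (Eg : ex_RInt g c t) by (apply ex_RInt_cont; [lra|exact Hg]).
  assert (E := RInt_scal g c t (x c) Eg).
  unfold scal in E; simpl in E; unfold mult in E; simpl in E.
  assert (Hint : RInt (fun s => x c * g s) c t <= RInt (fun u => p u * x (tau u)) c t).
  { apply RInt_le; [lra| | |exact Hle].
    - apply ex_RInt_cont; [lra|]. intros z Hz.
      apply (continuous_mult (fun _ => x c) g); [apply continuous_const|apply Hg, Hz].
    - apply ex_RInt_cont; [lra|]. intros z Hz. apply p_x_tau_continuous. lra. }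
  rewrite E, (integral_p_x_tau c t Hct) in Hint.
  assert (0 < x t) by (apply x_pos; lra). assert (Hc : 0 < x c) by (apply x_pos; lra).
  apply (Rmult_lt_reg_l (x c)); lra.
Qed.

(* Choosing e from the hypothesis and t large, the integral in the hypothesis
   is below 1 at arbitrarily large t, contradicting that its limsup exceeds 1. *)
Lemma no_positive_solution_from_threshold : False.
Proof.
  destruct cond as [c1 [Hc1 Hc]].
  destruct (Hc 1 Rlt_0_1) as [e [[He _] [c2 [Hc2 Hlim]]]].
  destruct (ratio_eventually_ge_below_lam e He) as [Te HTe].
  destruct (tau_lim (Rmax M Te)) as [N HN].
  assert (HN1 : forall s, Rmax N M <= s -> M < tau s /\ Te < tau s).
  { intros s Hs. assert (H := HN s ltac:(pose proof (Rmax_l N M); lra)).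
    pose proof (Rmax_l M Te). pose proof (Rmax_r M Te). lra. }
  destruct (tau_lim (Rmax N M)) as [T HT].
  destruct (Hlim (Rmax T (Rmax N M))) as [t [Ht Hbig]].
  pose proof (Rmax_l T (Rmax N M)). pose proof (Rmax_r T (Rmax N M)).
  pose proof (Rmax_r N M).
  assert (Ht0 : t0 <= t) by lra.
  assert (Htau := HT t ltac:(lra)).
  destruct (sigma_bounds t Ht0) as [Hs1 Hs2].
  assert (Hwin : forall s, sigma t <= s <= t -> M < tau s /\ Te < tau s <= sigma t).
  { intros s Hs. destruct (HN1 s ltac:(lra)) as [Hm Hte].
    destruct (sigma_bounds s ltac:(lra)) as [Hs3 _].
    assert (sigma s <= sigma t) by (apply sigma_mono; lra). lra. }
  enough (Rint (fun s => p s *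
            exp (Rint (fun xi => (lam - e) * p xi) (tau s) (sigma t))) (sigma t) t < 1)
    by (simpl in Hbig; lra).
  apply weighted_integral_lt_1; [lra| |].
  - intros s Hs. apply (kernel_weight_continuous p tau _ M); [apply p_cont; lra
      |apply tau_cont; lra| |lra|].
    + intros z Hz. apply (continuous_mult (fun _ => lam - e) p);
        [apply continuous_const|apply p_cont; lra].
    + apply (filter_imp (fun u => Rmax N M < u)); [|apply open_gt; lra].
      intros u Hu. apply (HN1 u). lra.
  - intros s Hs. destruct (Hwin s ltac:(lra)) as [Hm [Hte Hsig]].
    assert (Hlow := x_tau_lower_bound e s (sigma t) ltac:(lra)
                      (fun u Hu => HTe u ltac:(lra))).
    assert (0 <= p s) by (apply p_nonneg; lra). nra.
Qed.

End Threshold.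

Lemma no_positive_solution : False.
Proof.
  destruct (tau_lim A) as [N HN].
  apply (no_positive_solution_from_threshold (Rmax N A)); [apply Rmax_r|].
  intros s Hs. left. apply HN. pose proof (Rmax_l N A). lra.
Qed.

End PositiveSolution.

Theorem corollary3p2
  (t0 : R) (p tau sigma : R -> R) (beta lam : R)
  (Hp_cont : cont_from t0 p) (Htau_cont : cont_from t0 tau)
  (Hp_nonneg : forall t, t0 <= t -> 0 <= p t)
  (Htau_nonneg : forall t, t0 <= t -> 0 <= tau t)
  (Htau_le : forall t, t0 <= t -> tau t <= t)
  (Htau_lim : forall M, exists T, forall t, T <= t -> M < tau t)
  (Hbeta : liminf_infty_eq (fun t => Rint p (tau t) t) beta)
  (Hbeta_range : 0 < beta <= exp (-1))
  (Hlam_root : exp (beta * lam) = lam)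
  (Hlam_min : forall l, exp (beta * l) = l -> lam <= l)
  (Hsigma_cont : cont_from t0 sigma)
  (Hsigma_mono : forall s t, t0 <= s -> s <= t -> sigma s <= sigma t)
  (Hsigma_bounds : forall t, t0 <= t -> tau t <= sigma t <= t)
  (Hcond : limsup_0plus_gt
     (fun eps c => limsup_infty_gt
        (fun t => Rint (fun s => p s *
             exp (Rint (fun xi => (lam - eps) * p xi) (tau s) (sigma t)))
           (sigma t) t) c)
     1) :
  forall x : R -> R, is_solution t0 p tau x -> oscillatory x.
Proof.
  intros x [T0 [T1 [x' [HT0 [HT1 [Hxc [Hxd [_ Heq]]]]]]]].
  apply NNPP; intro Hosc. destruct (not_all_ex_not _ _ Hosc) as [T HT].
  (* T0 <= T1 because tau T0 <= T0 *)
  assert (HT01 : T0 <= T1) by (apply (proj1 HT1); split; auto).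
  set (A := Rmax (Rmax T T1) t0 + 1).
  assert (HA : T < A /\ T1 < A /\ t0 < A).
  { pose proof (Rmax_l (Rmax T T1) t0). pose proof (Rmax_r (Rmax T T1) t0).
    pose proof (Rmax_l T T1). pose proof (Rmax_r T T1). unfold A. lra. }
  assert (Hpc : forall s, t0 < s -> continuous p s) by (intros; eapply cont_from_continuous; eauto).
  assert (Htc : forall s, t0 < s -> continuous tau s) by (intros; eapply cont_from_continuous; eauto).
  assert (HxA : forall s, A <= s -> continuous x s) by (intros; apply (cont_from_continuous T0); auto; lra).
  assert (HdA : forall s, A <= s -> is_derive x s (x' s)) by (intros; apply (has_deriv_from_is_derive T1); auto; lra).
  assert (HeA : forall s, A <= s -> x' s + p s * x (tau s) = 0) by (intros; apply Heq; lra).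
  assert (Hnz : forall s, A <= s -> x s <> 0) by (intros s Hs H0; apply HT; exists s; split; [lra|exact H0]).
  destruct (constant_sign x A HxA Hnz) as [Hpos|Hneg].
  - apply (no_positive_solution t0 p tau sigma beta lam x x' A); auto; lra.
  - apply (no_positive_solution t0 p tau sigma beta lam (fun u => - x u) (fun u => - x' u) A);
      auto; try lra.
    + intros s Hs. apply (continuous_opp x), HxA, Hs.
    + intros s Hs. apply (is_derive_opp x), HdA, Hs.
    + intros s Hs. specialize (HeA s Hs). lra.
    + intros s Hs. specialize (Hneg s Hs). lra.
Qed.
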